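(* Let $G$ be a second countable locally compact abelian group, let $\mu$ be a translation bounded measure on $G$, and let $\mathcal{A}=(A_n)_n$ be a van Hove sequence in $G$. Assume that \[\liminf_{n\to\infty}\frac{|\mu|(A_n)}{\mathrm{vol}(A_n)}>0.\] (a) If $\gamma_{\mathrm{count}}$ is any vague cluster point of the sequence $(\gamma_{\mu_n})_n$, then there exist $C\in(0,\infty)$ and a vague cluster point $\gamma_{\mathrm{dens}}$ of $(\gamma_n)_n$ such that $\gamma_{\mathrm{dens}}=C\gamma_{\mathrm{count}}$. (b) If $\gamma_{\mathrm{dens}}$ is any vague cluster point of $(\gamma_n)_n$, then there exist $D\in(0,\infty)$ and a vague cluster point $\gamma_{\mathrm{count}}$ of $(\gamma_{\mu_n})_n$ such that $\gamma_{\mathrm{count}}=D\gamma_{\mathrm{dens}}$.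
   Context: $\mathrm{vol}$ denotes Haar measure on $G$. A van Hove sequence is a sequence $(A_n)_n$ of compact sets of positive Haar measure such that for every compact $K\subseteq G$, $\mathrm{vol}(\partial^K A_n)/\mathrm{vol}(A_n)\to0$, where $\partial^K A=((A+K)\setminus A^\circ)\cup((\overline{G\setminus A}-K)\cap A)$. A (Radon) measure $\mu$ is translation bounded if $\sup_{t\in G}|\mu|(t+K)<\infty$ for every compact $K$, where $|\mu|$ is the total variation measure. For a finite measure $\nu$, $\widetilde{\nu}$ denotes the reflected conjugate measure $\widetilde\nu(A)=\overline{\nu(-A)}$. Set $\mu_n=\mu|_{A_n}$, $\gamma_{\mu_n}=\frac{1}{|\mu_n|(G)}\mu_n*\widetilde{\mu_n}$ if $\mu_n\neq0$ and $\gamma_{\mu_n}=0$ otherwise, and $\gamma_n=\frac{1}{\mathrm{vol}(A_n)}\mu_n*\widetilde{\mu_n}$. Cluster points are taken in the vague topology (weak-* topology with respect to compactly supported continuous functions). *)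

From HB Require Import structures.
From mathcomp Require Import all_boot all_order all_algebra.
From mathcomp Require Import all_classical all_reals all_analysis.

Set Implicit Arguments.
Unset Strict Implicit.
Unset Printing Implicit Defensive.

Import Order.TTheory GRing.Theory Num.Theory.
Import numFieldNormedType.Exports.
Local Open Scope classical_set_scope.
Local Open Scope ring_scope.

(* The Borel sigma-algebra of a topological abelian group G:
   borel G is G equipped with the sigma-algebra generated by the open sets. *)
Definition borel (G : topologicalZmodType) : Type := G.

Section BorelInstance.
Variable G : topologicalZmodType.
HB.instance Definition _ := Choice.on (borel G).
HB.instance Definition _ := isPointed.Build (borel G) (0 : G).
Definition open_sets : set (set (borel G)) := @open G.
HB.instance Definition _ := @isMeasurable.Build (sigma_display open_sets)
  (borel G) <<s open_sets >> (@sigma_algebra0 _ setT open_sets)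
  (@sigma_algebraC _ open_sets) (@sigma_algebra_bigcup _ setT open_sets).
End BorelInstance.

Section Defs.
Context {R : realType} {G : topologicalZmodType}.
Local Notation BG := (borel G).

Definition mev (m : {measure set BG -> \bar R}) (A : set G) : \bar R :=
  m (A : set BG).
Definition bmeasurable (A : set G) : Prop := measurable (A : set BG).
Definition rint (m : {measure set BG -> \bar R}) (A : set G) (f : G -> R) : R :=
  Rintegral m (A : set BG) (f : BG -> R).

Definition setadd (A B : set G) : set G := [set a + b | a in A & b in B].
Definition setsub (A B : set G) : set G := [set a - b | a in A & b in B].
Definition translate (t : G) (A : set G) : set G := [set t + a | a in A].

Definition vH_boundary (K A : set G) : set G :=
  (setadd A K `\` interior A) `|` (setsub (closure (~` A)) K `&` A).

Definition haar_measure (vol : {measure set BG -> \bar R}) : Prop :=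
  [/\ (forall (t : G) (A : set G), bmeasurable A -> mev vol (translate t A) = mev vol A),
      (forall K : set G, compact K -> (mev vol K < +oo)%E) &
      (forall U : set G, open U -> U !=set0 -> (0 < mev vol U)%E)].

Definition van_Hove (vol : {measure set BG -> \bar R}) (A : nat -> set G) : Prop :=
  (forall n, compact (A n)) /\ (forall n, (0 < mev vol (A n))%E) /\
  (forall K : set G, compact K ->
     (fun n => fine (mev vol (vH_boundary K (A n))) / fine (mev vol (A n))) @ \oo --> 0).

Definition cnorm (z : R * R) : R := Num.sqrt (z.1 ^+ 2 + z.2 ^+ 2).
Definition cscale (c : R) (z : R * R) : R * R := (c * z.1, c * z.2).
Definition csub (z w : R * R) : R * R := (z.1 - w.1, z.2 - w.2).

(* A complex Radon measure  mu = (rp - rn) + i (ip - in)  given by four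
   positive locally finite Borel measures (Jordan decompositions of the
   real and imaginary parts).  Only intrinsic quantities of mu are used. *)
Record cmeasure := CMeasure {
  cm_rp : {measure set BG -> \bar R};
  cm_rn : {measure set BG -> \bar R};
  cm_ip : {measure set BG -> \bar R};
  cm_in : {measure set BG -> \bar R} }.

Definition locally_finite_m (m : {measure set BG -> \bar R}) : Prop :=
  forall K : set G, compact K -> (mev m K < +oo)%E.

Definition cm_locally_finite (mu : cmeasure) : Prop :=
  [/\ locally_finite_m (cm_rp mu), locally_finite_m (cm_rn mu),
      locally_finite_m (cm_ip mu) & locally_finite_m (cm_in mu)].

Definition cval (mu : cmeasure) (B : set G) : R * R :=
  (fine (mev (cm_rp mu) B) - fine (mev (cm_rn mu) B),
   fine (mev (cm_ip mu) B) - fine (mev (cm_in mu) B)).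

Definition tvar (mu : cmeasure) (A : set G) : \bar R :=
  ereal_sup [set x : \bar R | exists (n : nat) (B : 'I_n -> set G),
     [/\ (forall i, bmeasurable (B i)), (forall i, B i `<=` A),
         (forall i j, i != j -> B i `&` B j = set0) &
         x = (\sum_(i < n) cnorm (cval mu (B i)))%:E]].

Definition translation_bounded (mu : cmeasure) : Prop :=
  forall K : set G, compact K ->
    exists M : R, forall t : G, (tvar mu (translate t K) <= M%:E)%E.

Definition Cc (f : G -> R) : Prop :=
  continuous f /\ exists K : set G, compact K /\ (forall x, ~ K x -> f x = 0).

Definition dbl (p q : {measure set BG -> \bar R}) (A : set G) (f : G -> R) : R :=
  rint p A (fun x => rint q A (fun y => f (x - y))).

Definition sdbl (p1 p2 q1 q2 : {measure set BG -> \bar R}) A f : R :=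
  dbl p1 q1 A f - dbl p1 q2 A f - dbl p2 q1 A f + dbl p2 q2 A f.

(* (mu|_A * ~(mu|_A))(f) = int int f(x - y) d mu_A(x) d conj(mu_A)(y),
   f real-valued; with mu = a + i b this is
   (a,a) + (b,b) + i ((b,a) - (a,b)). *)
Definition autocorr (mu : cmeasure) (A : set G) (f : G -> R) : R * R :=
  let a1 := cm_rp mu in let a2 := cm_rn mu in
  let b1 := cm_ip mu in let b2 := cm_in mu in
  (sdbl a1 a2 a1 a2 A f + sdbl b1 b2 b1 b2 A f,
   sdbl b1 b2 a1 a2 A f - sdbl a1 a2 b1 b2 A f).

Definition gamma_dens (vol : {measure set BG -> \bar R}) (mu : cmeasure)
  (A : nat -> set G) (n : nat) (f : G -> R) : R * R :=
  cscale (fine (mev vol (A n)))^-1 (autocorr mu (A n) f).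

(* gamma_{mu_n} = (1/|mu_n|(G)) mu_n * ~mu_n, or 0 if mu_n = 0;
   note |mu_n|(G) = |mu|(A_n), and mu_n = 0 iff |mu|(A_n) = 0 *)
Definition gamma_count (mu : cmeasure) (A : nat -> set G) (n : nat)
  (f : G -> R) : R * R :=
  if tvar mu (A n) == 0%E then (0, 0)
  else cscale (fine (tvar mu (A n)))^-1 (autocorr mu (A n) f).

(* A complex Radon measure seen as a functional on C_c(G) (by complex
   linearity it is determined by its values on real-valued test functions):
   R-linear, and continuous for the inductive limit topology of C_c(G). *)
Definition radon_functional (g : (G -> R) -> R * R) : Prop :=
  (forall (a b : R) (f h : G -> R), Cc f -> Cc h ->
      g (fun x => a * f x + b * h x) =
      ((a * (g f).1 + b * (g h).1), (a * (g f).2 + b * (g h).2))) /\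
  (forall K : set G, compact K -> exists c : R, forall (f : G -> R) (M : R),
      Cc f -> (forall x, ~ K x -> f x = 0) -> (forall x, `|f x| <= M) ->
      cnorm (g f) <= c * M).

Definition vague_cluster (s : nat -> (G -> R) -> R * R)
  (g : (G -> R) -> R * R) : Prop :=
  radon_functional g /\
  forall (fs : seq (G -> R)) (eps : R) (N : nat),
    (forall f, f \in fs -> Cc f) -> 0 < eps ->
    exists2 n, (N <= n)%N & forall f, f \in fs -> cnorm (csub (s n f) (g f)) < eps.

Definition meas_eq_scaled (g1 : (G -> R) -> R * R) (c : R)
  (g2 : (G -> R) -> R * R) : Prop :=
  forall f, Cc f -> g1 f = cscale c (g2 f).

End Defs.

From Pilot Require Import Defs.
From HB Require Import structures.
From mathcomp Require Import all_boot all_order all_algebra.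
From mathcomp Require Import all_classical all_reals all_analysis.
From mathcomp Require Import ring lra.

(* For large [n] the ratio [r n = |mu|(A n) / vol(A n)] lies in a compact
   interval [[a, b]] of ]0, +oo[.  The lower bound is the liminf hypothesis.
   For the upper bound pick a compact [C] and an open [W] containing 0 with
   [W - W ⊆ C], and a maximal family of points [t] of [A n] whose translates
   [t + W] are pairwise disjoint: there are at most
   [vol(A n + W) / vol W <= (vol(A n) + vol(∂^C A n)) / vol W] of them, the
   translates [t + C] cover [A n], and each carries total variation at most
   [sup_t |mu|(t + C) < +oo]; the van Hove property makes the boundary term
   negligible.  Since [gamma_n = r n * gamma_(mu_n)], a cluster point [c] of
   [r n] along the net witnessing a vague cluster point of one sequence turns
   it into [c] (resp. [1 / c]) times a vague cluster point of the other. *)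

Set Implicit Arguments.
Unset Strict Implicit.
Unset Printing Implicit Defensive.
Import Order.TTheory GRing.Theory Num.Theory.
Import numFieldNormedType.Exports.
Local Open Scope classical_set_scope.
Local Open Scope ring_scope.

(* [charge] exports a homonymous [cscale]. *)
Local Notation cscale := Defs.cscale.

Section ComplexPairs.
Context {R : realType}.
Implicit Types (z w : R * R).

Definition cadd z w : R * R := (z.1 + w.1, z.2 + w.2).

Lemma cnorm_ge0 z : 0 <= cnorm z.
Proof. exact: sqrtr_ge0. Qed.

Lemma cnormZ (c : R) z : cnorm (cscale c z) = `|c| * cnorm z.
Proof.
rewrite /cnorm /cscale /= !exprMn -mulrDr sqrtrM ?sqr_ge0 //.
by rewrite sqrtr_sqr.
Qed.

Lemma cdot_le_cnorm z w : z.1 * w.1 + z.2 * w.2 <= cnorm z * cnorm w.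
Proof.
rewrite /cnorm -sqrtrM ?addr_ge0 ?sqr_ge0 //.
have [dot_le0|dot_gt0] := leP (z.1 * w.1 + z.2 * w.2) 0.
  exact: le_trans dot_le0 (sqrtr_ge0 _).
rewrite -(ger0_norm (ltW dot_gt0)) -sqrtr_sqr ler_sqrt ?mulr_ge0 ?addr_ge0 ?sqr_ge0 //.
(* Lagrange's identity: dot^2 + (z.1 w.2 - z.2 w.1)^2 = |z|^2 |w|^2 *)
have := sqr_ge0 (z.1 * w.2 - z.2 * w.1); nra.
Qed.

Lemma ler_cnormD z w : cnorm (cadd z w) <= cnorm z + cnorm w.
Proof.
have nzw := addr_ge0 (cnorm_ge0 z) (cnorm_ge0 w).
rewrite {1}/cnorm -(ger0_norm nzw) -sqrtr_sqr ler_sqrt ?sqr_ge0 //.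
rewrite [X in _ <= X]sqrrD /cnorm !sqr_sqrtr ?addr_ge0 ?sqr_ge0 // mulr2n.
have := cdot_le_cnorm z w; rewrite /cnorm /cadd /=; nra.
Qed.

Lemma cnorm_cscaleB (r c : R) z w :
  cnorm (csub (cscale r z) (cscale c w)) <= `|r| * cnorm (csub z w) + `|r - c| * cnorm w.
Proof.
have -> : csub (cscale r z) (cscale c w) = cadd (cscale r (csub z w)) (cscale (r - c) w).
  by rewrite /csub /cscale /cadd /=; congr (_, _); ring.
by rewrite -!cnormZ; exact: ler_cnormD.
Qed.

Lemma cscaleK (c : R) : c != 0 -> cancel (cscale c) (cscale c^-1).
Proof. by move=> c0 [x y]; rewrite /cscale /= !mulKf. Qed.

End ComplexPairs.

Section TranslatesTopology.
Context {G : topologicalZmodType}.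

Definition union_translates (K : set G) (ts : seq G) : set G :=
  \big[setU/set0]_(t <- ts) translate t K.

Lemma union_translatesP (K : set G) ts x :
  union_translates K ts x <-> exists2 t, t \in ts & translate t K x.
Proof.
rewrite /union_translates; elim: ts => [|t ts IH]; first by rewrite big_nil; split=> // -[].
rewrite big_cons; split.
  move=> [Ktx|/IH [u uts Kux]]; first by exists t; rewrite ?mem_head.
  by exists u; rewrite ?in_cons ?uts ?orbT.
by move=> [u]; rewrite in_cons => /orP[/eqP->|uts Kux]; [left|right; apply/IH; exists u].
Qed.

Lemma continuous_addl (t : G) : continuous (fun x : G => t + x).
Proof.
move=> x; apply: (@continuous_comp _ _ _ (fun y => (t, y)) (fun p : G * G => p.1 + p.2)).
  by apply: cvg_pair; [exact: cvg_cst|exact: cvg_id].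
exact: add_continuous.
Qed.

Lemma open_translate (t : G) (U : set G) : open U -> open (translate t U).
Proof.
move=> oU; have -> : translate t U = (fun x => - t + x) @^-1` U.
  apply/seteqP; split => x /=; first by move=> [a Ua <-]; rewrite addKr.
  by move=> Ux; exists (- t + x) => //; rewrite addNKr.
by apply: open_comp => // x _; exact: continuous_addl.
Qed.

Lemma compact_translate (t : G) (K : set G) : compact K -> compact (translate t K).
Proof.
move=> cK; apply: continuous_compact => //.
by apply: continuous_subspaceT; exact: continuous_addl.
Qed.

Lemma open_setadd (A W : set G) : open W -> open (setadd A W).
Proof.
move=> oW; have -> : setadd A W = \bigcup_(a in A) translate a W.
  by apply/seteqP; split => _ [a Aa [w Ww <-]]; exists a => //; exists w.
by apply: bigcup_open => a _; exact: open_translate.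
Qed.

Lemma compact_setadd (A C : set G) : compact A -> compact C -> compact (setadd A C).
Proof.
move=> cA cC; have -> : setadd A C = (fun p : G * G => p.1 + p.2) @` (A `*` C).
  apply/seteqP; split => x /=; first by move=> [a Aa [c Cc <-]]; exists (a, c).
  by move=> [[a c] [/= Aa Cc] <-]; exists a => //; exists c.
apply: continuous_compact; last exact: compact_setX.
by apply: continuous_subspaceT; exact: add_continuous.
Qed.

Lemma closed_setsub (F C : set G) : closed F -> compact C -> closed (setsub F C).
Proof.
move=> cF cC; rewrite -openC openE => x nFCx.
have nearC : \forall y \near x, C `<=` (fun c => ~ F (y + c)).
  apply: (proj1 (compact_near_coveringP C) cC) => c Cc.
  have nFcx : (~` F) (c + x).
    by move=> Fcx; apply: nFCx; exists (c + x) => //; exists c => //; rewrite addrC addKr.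
  have := add_continuous (c, x) _ (open_nbhs_nbhs (conj (closed_openC cF) nFcx)).
  apply: (@filterS _ _ _ (fun p : G * G => (~` F) (p.1 + p.2))).
  by move=> -[c' y] /=; rewrite addrC.
by apply: filterS nearC => y nFyC [f Ff [c Cc fc]]; apply: (nFyC c Cc); rewrite -fc subrK.
Qed.

Lemma exists_nbhs0_diff_compact : locally_compact [set: G] ->
  exists C W : set G, [/\ compact C, open W, W 0 &
    forall w1 w2, W w1 -> W w2 -> C (w2 - w1)].
Proof.
move=> lc; have [C nC [cC _]] := lc 0 I; rewrite withinET in nC.
have := @sub_continuous G (0, 0); rewrite /continuous_at /= subr0.
move=> /(_ _ nC) [[U V] /= [nU nV] UVC].
have : nbhs (0 : G) (U `&` V) by apply: filterI.
rewrite nbhsE => -[W [oW W0] WUV].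
exists C, W; split => // w1 w2 /WUV [_ Vw1] /WUV [Uw2 _].
exact: (UVC (w2, w1)).
Qed.

End TranslatesTopology.

Section TotalVariation.
Context {R : realType} {G : topologicalZmodType}.
Local Notation BG := (borel G).
Implicit Types (mu : @cmeasure R G) (m : {measure set BG -> \bar R}).

Lemma open_bmeasurable (U : set G) : open U -> bmeasurable U.
Proof. by move=> oU; apply: sub_sigma_algebra. Qed.

Lemma closed_bmeasurable (F : set G) : closed F -> bmeasurable F.
Proof.
move=> cF; rewrite -(setCK F); apply: (@measurableC _ BG).
by apply: open_bmeasurable; rewrite openC.
Qed.

Lemma compact_bmeasurable (K : set G) : hausdorff_space G -> compact K -> bmeasurable K.
Proof. by move=> hG cK; apply: closed_bmeasurable; exact: compact_closed. Qed.

Lemma le_mev m (A B : set G) : bmeasurable A -> bmeasurable B -> A `<=` B ->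
  (mev m A <= mev m B)%E.
Proof. by move=> mA mB AB; apply: le_measure => //; rewrite inE. Qed.

Lemma mev_ge0 m (A : set G) : (0 <= mev m A)%E.
Proof. exact: measure_ge0. Qed.

Lemma mev_fin_num m (A B : set G) : bmeasurable A -> bmeasurable B -> A `<=` B ->
  (mev m B < +oo)%E -> mev m A \is a fin_num.
Proof.
move=> mA mB AB fB; rewrite ge0_fin_numE ?mev_ge0 //.
exact: le_lt_trans (le_mev m mA mB AB) fB.
Qed.

Lemma fine_mevDI m (B S : set G) : bmeasurable B -> bmeasurable S ->
  (mev m B < +oo)%E ->
  fine (mev m B) = fine (mev m (B `\` S)) + fine (mev m (B `&` S)).
Proof.
move=> mB mS fB; have mBS : bmeasurable (B `\` S) by apply: (@measurableD _ BG).
have mBIS : bmeasurable (B `&` S) by apply: (@measurableI _ BG).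
rewrite {1}/mev (measureDI m mB mS) fineD //.
- by apply: mev_fin_num mBS mB _ fB => x [].
- by apply: mev_fin_num mBIS mB _ fB => x [].
Qed.

Definition cm_finite_on mu (X : set G) := forall B, bmeasurable B -> B `<=` X ->
  [/\ (mev (cm_rp mu) B < +oo)%E, (mev (cm_rn mu) B < +oo)%E,
      (mev (cm_ip mu) B < +oo)%E & (mev (cm_in mu) B < +oo)%E].

Lemma cm_finite_onS mu X Y : X `<=` Y -> cm_finite_on mu Y -> cm_finite_on mu X.
Proof. by move=> XY fY B mB BX; apply: fY => //; exact: subset_trans XY. Qed.

Lemma cm_finite_on_compact mu K : hausdorff_space G -> cm_locally_finite mu ->
  compact K -> cm_finite_on mu K.
Proof.
move=> hG [frp frn fip fin] cK B mB BK; have mK := compact_bmeasurable hG cK.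
split; apply: le_lt_trans (le_mev _ mB mK BK) _.
- exact: frp.
- exact: frn.
- exact: fip.
- exact: fin.
Qed.

Lemma cvalDI mu X (B S : set G) : cm_finite_on mu X -> bmeasurable B -> B `<=` X ->
  bmeasurable S -> cval mu B = cadd (cval mu (B `\` S)) (cval mu (B `&` S)).
Proof.
move=> fX mB BX mS; have [frp frn fip fin] := fX B mB BX.
rewrite /cval /cadd /= (fine_mevDI mB mS frp) (fine_mevDI mB mS frn).
by rewrite (fine_mevDI mB mS fip) (fine_mevDI mB mS fin); congr (_, _); ring.
Qed.

Lemma tvar_ge0 mu X : (0 <= tvar mu X)%E.
Proof.
apply: ereal_sup_ubound; exists 0%N, (fun _ => set0); split => //.
- by move=> i; apply: (@measurable0 _ BG).
- by move=> i; apply: sub0set.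
- by move=> i j _; rewrite setI0.
- by rewrite big_ord0.
Qed.

Lemma tvar0 mu : tvar mu set0 = 0%E.
Proof.
apply/eqP; rewrite eq_le tvar_ge0 andbT; apply: ge_ereal_sup => _ [n [B [_ B0 _ ->]]].
rewrite lee_fin big1 // => i _; move: (B0 i); rewrite subset0 => ->.
by rewrite /cval /mev !measure0 /= subrr /cnorm expr0n /= addr0 sqrtr0.
Qed.

Lemma le_tvar_setU mu X (S T : set G) : cm_finite_on mu X -> bmeasurable S ->
  X `<=` S `|` T -> (tvar mu X <= tvar mu S + tvar mu T)%E.
Proof.
move=> fX mS XST; apply: ge_ereal_sup => _ [n [B [mB BX dB ->]]].
have dB' (P : set G) i j : i != j -> (B i `&` P) `&` (B j `&` P) = set0.
  by move=> ij; rewrite -subset0 => x [[Bix _] [Bjx _]]; rewrite -(dB i j ij); split.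
apply: (@le_trans _ _ ((\sum_(i < n) cnorm (cval mu (B i `&` S)))%:E +
   (\sum_(i < n) cnorm (cval mu (B i `&` ~` S)))%:E)).
  rewrite -EFinD lee_fin -big_split /=; apply: ler_sum => i _.
  by rewrite addrC (cvalDI fX (mB i) (BX i) mS); exact: ler_cnormD.
apply: leeD; apply: ereal_sup_ubound.
- exists n, (fun i => B i `&` S); split => //; last exact: dB'.
  by move=> i; apply: (@measurableI _ BG); [exact: mB|exact: mS].
- exists n, (fun i => B i `&` ~` S); split => //; last exact: dB'.
  + by move=> i; apply: (@measurableD _ BG); [exact: mB|exact: mS].
  + by move=> i x [/BX /XST [] // Sx /(_ Sx)].
Qed.

Lemma tvar_le_union_translates mu (K X : set G) (M : R) (ts : seq G) :
  hausdorff_space G -> compact K ->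
  (forall t, (tvar mu (translate t K) <= M%:E)%E) -> cm_finite_on mu X ->
  X `<=` union_translates K ts -> (tvar mu X <= ((size ts)%:R * M)%:E)%E.
Proof.
move=> hG cK hM; elim: ts X => [|t ts IH] X fX; rewrite /union_translates.
  by rewrite big_nil mul0r subset0 => ->; rewrite tvar0.
rewrite big_cons => XU.
have mtK : bmeasurable (translate t K).
  by apply: compact_bmeasurable => //; exact: compact_translate.
apply: le_trans (le_tvar_setU (T := X `\` translate t K) fX mtK _) _.
  by move=> x Xx; have [|] := pselect (translate t K x); [left|right].
apply: le_trans (leeD (hM t) (IH _ (cm_finite_onS (@subDsetl _ _ _) fX) _)) _.
  by move=> x [/XU [Ktx /(_ Ktx) []|]].
by rewrite -EFinD lee_fin /= mulrSr mulrDl mul1r addrC.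
Qed.

End TotalVariation.

Section Packing.
Context {R : realType} {G : topologicalZmodType}.
Variables (vol : {measure set borel G -> \bar R}) (W : set G).
Hypotheses (vol_translate : forall t (B : set G), bmeasurable B ->
              mev vol (translate t B) = mev vol B)
           (oW : open W) (fW : mev vol W \is a fin_num).

Fixpoint disjoint_translates (ts : seq G) : Prop :=
  if ts is t :: ts' then
    translate t W `&` union_translates W ts' = set0 /\ disjoint_translates ts'
  else True.

Lemma union_translates_bmeasurable ts : bmeasurable (union_translates W ts).
Proof.
apply: open_bmeasurable; apply: big_ind => //; first exact: open0.
- by move=> U V; exact: openU.
- by move=> t _; exact: open_translate.
Qed.

Lemma mev_union_translates ts : disjoint_translates ts ->
  mev vol (union_translates W ts) = ((size ts)%:R * fine (mev vol W))%:E.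
Proof.
elim: ts => [|t ts IH] /=; first by rewrite /union_translates big_nil mul0r /mev measure0.
move=> [dt /IH {}IH]; have mtW := open_bmeasurable (open_translate t oW).
transitivity (mev vol (translate t W) + mev vol (union_translates W ts))%E.
  rewrite /union_translates big_cons.
  by apply: measureU; [exact: mtW|exact: union_translates_bmeasurable|exact: dt].
rewrite vol_translate; last exact: open_bmeasurable.
rewrite IH -{1}(fineK fW) -EFinD.
by rewrite mulrSr mulrDl mul1r addrC.
Qed.

Lemma union_translates_sub_setadd (A : set G) ts : (forall t, t \in ts -> A t) ->
  union_translates W ts `<=` setadd A W.
Proof.
by move=> tsA x /union_translatesP [t /tsA At [w Ww <-]]; exists t => //; exists w.
Qed.

Lemma packing_size_le (A : set G) ts : (forall t, t \in ts -> A t) ->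
  disjoint_translates ts -> (mev vol (setadd A W) < +oo)%E ->
  (size ts)%:R * fine (mev vol W) <= fine (mev vol (setadd A W)).
Proof.
move=> tsA dts fAW; rewrite -lee_fin -mev_union_translates // fineK ?ge0_fin_numE ?mev_ge0 //.
apply: le_mev (union_translates_sub_setadd tsA).
- exact: union_translates_bmeasurable.
- exact: open_bmeasurable (open_setadd A oW).
Qed.

Lemma exists_maximal_packing (A : set G) :
  0 < fine (mev vol W) -> (mev vol (setadd A W) < +oo)%E ->
  exists ts, [/\ forall t, t \in ts -> A t, disjoint_translates ts &
    forall a, A a -> translate a W `&` union_translates W ts !=set0].
Proof.
move=> vW0 fAW; apply: contrapT => nomax.
have packing_of_size k : exists ts,
    [/\ forall t, t \in ts -> A t, disjoint_translates ts & size ts = k].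
  elim: k => [|k [ts [tsA dts <-]]]; first by exists [::].
  have /existsNP [a /not_implyP [Aa aWts]] :
      ~ (forall a, A a -> translate a W `&` union_translates W ts !=set0).
    by move=> maxts; apply: nomax; exists ts.
  exists (a :: ts); split => //=.
  - by move=> t; rewrite in_cons => /orP[/eqP ->|/tsA].
  - by split => //; apply/seteqP; split => // x aWx; apply: aWts; exists x.
pose k := (Num.truncn (fine (mev vol (setadd A W)) / fine (mev vol W))).+1.
have [ts [tsA dts sts]] := packing_of_size k.
have := packing_size_le tsA dts fAW; rewrite sts -ler_pdivlMr //.
by move=> /(lt_le_trans (truncnS_gt _)); rewrite ltxx.
Qed.

Lemma maximal_packing_cover (A C : set G) ts :
  (forall w1 w2, W w1 -> W w2 -> C (w2 - w1)) ->
  (forall a, A a -> translate a W `&` union_translates W ts !=set0) ->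
  A `<=` union_translates C ts.
Proof.
move=> WWC maxts a Aa.
have [_ [[w1 Ww1 <-] /union_translatesP [t tts [w2 Ww2 tw2]]]] := maxts a Aa.
apply/union_translatesP; exists t => //; exists (w2 - w1); first exact: WWC.
by rewrite addrA tw2 addrK.
Qed.

End Packing.

Section HaarPacking.
Context {R : realType} {G : topologicalZmodType}.
Variables (vol : {measure set borel G -> \bar R}) (mu : @cmeasure R G).
Hypotheses (hG : hausdorff_space G) (hv : haar_measure vol).

Lemma vH_boundary_bmeasurable (C K : set G) : compact C -> compact K ->
  bmeasurable (vH_boundary C K).
Proof.
move=> cC cK; apply: (@measurableU _ (borel G)).
  apply: (@measurableD _ (borel G)); last exact: open_bmeasurable (open_interior _).
  exact: compact_bmeasurable (compact_setadd cK cC).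
apply: (@measurableI _ (borel G)); last exact: compact_bmeasurable.
by apply: closed_bmeasurable; apply: closed_setsub cC; exact: closed_closure.
Qed.

Lemma vH_boundary_sub_setadd (C K : set G) : C 0 -> vH_boundary C K `<=` setadd K C.
Proof. by move=> C0 x [[] //|[_ Kx]]; exists x => //; exists 0 => //; rewrite addr0. Qed.

Lemma setadd_sub_vH_boundary (C W K : set G) : W `<=` C ->
  setadd K W `<=` K `|` vH_boundary C K.
Proof.
move=> WC _ [k Kk [w Ww <-]]; have [|nK] := pselect (K (k + w)); first by left.
right; left; split; last by move=> /interior_subset.
by exists k => //; exists w => //; exact: WC.
Qed.

Lemma haar_fine_gt0 (U K : set G) : open U -> U !=set0 -> compact K -> U `<=` K ->
  0 < fine (mev vol U).
Proof.
move=> oU U0 cK UK; have [_ vol_fin vol_pos] := hv; apply: fine_gt0.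
rewrite vol_pos //=; apply: le_lt_trans (vol_fin K cK).
exact: le_mev (open_bmeasurable oU) (compact_bmeasurable hG cK) UK.
Qed.

Lemma mev_setadd_vH_boundary (C W K : set G) : compact C -> open W -> W `<=` C ->
  compact K ->
  (mev vol (setadd K W) <= mev vol K + mev vol (vH_boundary C K))%E.
Proof.
move=> cC oW WC cK; have mK := compact_bmeasurable hG cK.
have mdK := vH_boundary_bmeasurable cC cK.
apply: le_trans (measureU2 vol mK mdK).
apply: le_mev (setadd_sub_vH_boundary WC).
- exact: open_bmeasurable (open_setadd K oW).
- exact: (@measurableU _ (borel G)).
Qed.

Lemma tvar_mul_vol_le (C W K : set G) (M : R) :
  cm_locally_finite mu -> compact C -> open W -> W 0 ->
  (forall w1 w2, W w1 -> W w2 -> C (w2 - w1)) ->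
  (forall t, (tvar mu (translate t C) <= M%:E)%E) -> compact K ->
  fine (tvar mu K) * fine (mev vol W) <=
    M * (fine (mev vol K) + fine (mev vol (vH_boundary C K))).
Proof.
move=> lf cC oW W0 WWC hM cK; have [vol_translate vol_fin _] := hv.
have WC : W `<=` C by move=> w Ww; rewrite -[w]subr0; exact: WWC.
have C0 : C 0 by rewrite -(subr0 (0 : G)); exact: WWC.
have vW0 : 0 < fine (mev vol W) by apply: haar_fine_gt0 (ex_intro _ 0 W0) cC WC.
have fW : mev vol W \is a fin_num.
  exact: mev_fin_num (open_bmeasurable oW) (compact_bmeasurable hG cC) WC (vol_fin C cC).
have M0 : 0 <= M by rewrite -lee_fin; exact: le_trans (tvar_ge0 _ _) (hM 0).
have fK : mev vol K \is a fin_num by rewrite ge0_fin_numE ?mev_ge0 ?vol_fin.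
have fdK : mev vol (vH_boundary C K) \is a fin_num.
  apply: mev_fin_num (vH_boundary_sub_setadd C0) (vol_fin _ (compact_setadd cK cC)).
    exact: vH_boundary_bmeasurable.
  exact: compact_bmeasurable (compact_setadd cK cC).
have KW_le := mev_setadd_vH_boundary cC oW WC cK.
have fKW_lt : (mev vol (setadd K W) < +oo)%E.
  by apply: le_lt_trans KW_le _; rewrite -(fineK fK) -(fineK fdK) -EFinD ltry.
have fKW : mev vol (setadd K W) \is a fin_num by rewrite ge0_fin_numE ?mev_ge0.
have [ts [tsK dts maxts]] := exists_maximal_packing vol_translate oW fW vW0 fKW_lt.
have size_le := packing_size_le vol_translate oW fW tsK dts fKW_lt.
have tvar_le := tvar_le_union_translates hG cC hM (cm_finite_on_compact hG lf cK)
  (maximal_packing_cover WWC maxts).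
have tK : tvar mu K \is a fin_num.
  by rewrite ge0_fin_numE ?tvar_ge0 //; exact: le_lt_trans tvar_le (ltry _).
rewrite -(fineK tK) lee_fin in tvar_le.
rewrite -(fineK fKW) -(fineK fK) -(fineK fdK) -EFinD lee_fin in KW_le.
have := fine_ge0 (tvar_ge0 mu K); nra.
Qed.

End HaarPacking.

Lemma limn_einf_gt0_lbound {R : realType} (u : nat -> R) :
  (0 < limn_einf (fun n => (u n)%:E))%E ->
  exists2 a, 0 < a & exists N, forall n, (N <= n)%N -> a <= u n.
Proof.
rewrite limn_einf_lim (cvg_lim _ (@cvg_einfs_sup _ _)) // => /ereal_sup_gt [_ [N _ <-]].
have einfs_le n : (N <= n)%N -> (einfs (fun n => (u n)%:E) N <= (u n)%:E)%E.
  by move=> Nn; apply: ereal_inf_lbound; exists n.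
case E : (einfs (fun n => (u n)%:E) N) => [x| |] // x0.
- exists x; first by rewrite -lte_fin.
  by exists N => n Nn; have := einfs_le n Nn; rewrite E lee_fin.
- by have := einfs_le N (leqnn N); rewrite E.
Qed.

Section Autocorrelations.
Context {R : realType} {G : topologicalZmodType}.
Variables (vol : {measure set borel G -> \bar R}) (mu : @cmeasure R G) (A : nat -> set G).

Definition tvar_density (n : nat) : R := fine (tvar mu (A n)) / fine (mev vol (A n)).

Lemma gamma_densE n f : 0 < fine (mev vol (A n)) -> 0 < tvar_density n ->
  gamma_dens vol mu A n f = cscale (tvar_density n) (gamma_count mu A n f).
Proof.
rewrite /tvar_density => vA0 r0.
have t0 : fine (tvar mu (A n)) != 0 by apply: contraTneq r0 => ->; rewrite mul0r ltxx.
rewrite /gamma_count ifF; last by apply: contraNF t0 => /eqP ->.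
by rewrite /gamma_dens /cscale /=; congr (_, _); field; rewrite t0 gt_eqF.
Qed.

Lemma gamma_countE n f : 0 < fine (mev vol (A n)) -> 0 < tvar_density n ->
  gamma_count mu A n f = cscale (tvar_density n)^-1 (gamma_dens vol mu A n f).
Proof. by move=> vA0 r0; rewrite gamma_densE // cscaleK // gt_eqF. Qed.

Hypotheses (hG : hausdorff_space G) (hv : haar_measure vol) (vH : van_Hove vol A).

Lemma van_Hove_vol_gt0 n : 0 < fine (mev vol (A n)).
Proof.
have [_ vol_fin _] := hv; have [cA [vA_gt0 _]] := vH.
by apply: fine_gt0; rewrite vA_gt0 vol_fin ?cA.
Qed.

Lemma tvar_density_bounded : locally_compact [set: G] ->
  cm_locally_finite mu -> translation_bounded mu ->
  exists b N, forall n, (N <= n)%N -> tvar_density n <= b.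
Proof.
move=> lc lf tb; have [cA [_ vH_lim]] := vH.
have [C [W [cC oW W0 WWC]]] := exists_nbhs0_diff_compact lc.
have [M hM] := tb C cC.
have M0 : 0 <= M by rewrite -lee_fin; exact: le_trans (tvar_ge0 _ _) (hM 0).
have WC : W `<=` C by move=> w Ww; rewrite -[w]subr0; exact: WWC.
have vW0 := haar_fine_gt0 hG hv oW (ex_intro _ 0 W0) cC WC.
have [N _ dA_le1] := cvgr_le _ (vH_lim C cC) _ ltr01.
exists (2 * M / fine (mev vol W)), N => n /dA_le1 /=.
have := tvar_mul_vol_le hG hv lf cC oW W0 WWC hM (cA n).
have := van_Hove_vol_gt0 n; rewrite /tvar_density.
set t := fine (tvar mu _); set a := fine (mev vol _); set d := fine (mev vol _).
move=> a0 tw_le; rewrite ler_pdivrMr // mul1r => d_le.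
by rewrite ler_pdivrMr // mulrAC ler_pdivlMr //; nra.
Qed.

End Autocorrelations.

Section VagueClusterScale.
Context {R : realType} {G : topologicalZmodType}.
Implicit Types (s t : nat -> (G -> R) -> R * R) (g : (G -> R) -> R * R).

Lemma radon_functionalZ g (c : R) :
  radon_functional g -> radon_functional (fun f => cscale c (g f)).
Proof.
move=> [lin bd]; split.
  by move=> a b f h cf ch; rewrite lin //= /cscale /=; congr (_, _); ring.
move=> K cK; have [d hd] := bd K cK; exists (`|c| * d) => f M cf fK fM.
by rewrite cnormZ -mulrA ler_wpM2l //; exact: hd.
Qed.

Lemma vague_cluster_factor s g (r : nat -> R) (a b : R) (N0 : nat) :
  (forall n, (N0 <= n)%N -> a <= r n <= b) -> vague_cluster s g ->
  exists2 c, a <= c <= b & forall (fs : seq (G -> R)) (eps delta : R) (N : nat),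
    (forall f, f \in fs -> Cc f) -> 0 < eps -> 0 < delta ->
    exists n, [/\ (N <= n)%N, `|r n - c| < delta &
                  forall f, f \in fs -> cnorm (csub (s n f) (g f)) < eps].
Proof.
move=> rab [_ sg].
(* [r] along the directed set of tolerances [(fs, eps, N)] at which [s]
   approximates [g]; a cluster point of this filter in [[a, b]] is the factor. *)
pose D := [set i : seq (G -> R) * R * nat |
  [/\ 0 < i.1.2, forall f, f \in i.1.1 -> Cc f & (N0 <= i.2)%N]].
pose B (i : seq (G -> R) * R * nat) := r @` [set n | (i.2 <= n)%N /\
  forall f, f \in i.1.1 -> cnorm (csub (s n f) (g f)) < i.1.2].
have FF : Filter (filter_from D B).
  apply: filter_from_filter; first by exists ([::], 1, N0).
  move=> [[fs1 e1] N1] [[fs2 e2] N2] [/= e10 c1 n1] [/= e20 c2 n2].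
  exists (fs1 ++ fs2, Num.min e1 e2, maxn N1 N2).
    split => /=; [by rewrite lt_min e10|by move=> f; rewrite mem_cat => /orP[/c1|/c2]|].
    by rewrite leq_max n1.
  move=> _ [n [/= Nn hn] <-]; rewrite geq_max in Nn; case/andP: Nn => N1n N2n.
  split; exists n => //; split => // f fi; apply: lt_le_trans (hn f _) _;
    by rewrite ?mem_cat ?fi ?orbT // ge_min lexx ?orbT.
have PF : ProperFilter (filter_from D B).
  apply: filter_from_proper => // -[[fs e] N] [/= e0 cf _].
  by have [n Nn hn] := sg fs e N cf e0; exists (r n), n.
have Fab : filter_from D B `[a, b]%classic.
  exists ([::], 1, N0) => //; move=> _ [n [/= Nn _] <-].
  by rewrite /= in_itv /=; exact: rab.
have [c [abc clc]] := segment_compact PF Fab.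
exists c; first by move: abc; rewrite /= in_itv.
move=> fs eps delta N cfs eps0 delta0.
have Fi : filter_from D B (B (fs, eps, maxn N N0)).
  by exists (fs, eps, maxn N N0) => //; split => //=; rewrite leq_maxr.
have [_ [[n [/= Nn sgn] <-] rnc]] := clc _ _ Fi (nbhsx_ballx c delta delta0).
exists n; split => //; first by apply: leq_trans Nn; rewrite leq_maxl.
by rewrite distrC; move: rnc; rewrite /ball.
Qed.

Lemma vague_cluster_scale s t g (r : nat -> R) (a b : R) (N0 : nat) :
  0 < a -> (forall n, (N0 <= n)%N -> a <= r n <= b) ->
  (forall n f, (N0 <= n)%N -> t n f = cscale (r n) (s n f)) ->
  vague_cluster s g ->
  exists2 c, a <= c <= b & vague_cluster t (fun f => cscale c (g f)).
Proof.
move=> a0 rab tsr sg; have [c abc rc] := vague_cluster_factor rab sg.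
exists c => //; split; first exact: radon_functionalZ sg.1.
move=> fs eps N cfs eps0.
pose Bd := 1 + \sum_(f <- fs) cnorm (g f).
have Bd0 : 0 < Bd by rewrite ltr_pwDl // sumr_ge0 // => f _; exact: cnorm_ge0.
have gBd f : f \in fs -> cnorm (g f) <= Bd.
  move=> ffs; rewrite /Bd (big_rem f) //= addrCA lerDl addr_ge0 //.
  by rewrite sumr_ge0 // => h _; exact: cnorm_ge0.
have b0 : 0 < b by case/andP: abc => ac cb; apply: lt_le_trans a0 (le_trans ac cb).
have e1_gt0 : 0 < eps / (2 * b) by rewrite divr_gt0 // mulr_gt0.
have e2_gt0 : 0 < eps / (2 * Bd) by rewrite divr_gt0 // mulr_gt0.
have [n [Nn rnc sgn]] := rc fs _ _ (maxn N N0) cfs e1_gt0 e2_gt0.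
rewrite geq_max in Nn; case/andP: Nn => Nn N0n; exists n => // f ffs.
have /andP[arn rnb] := rab n N0n; have rn0 : 0 < r n := lt_le_trans a0 arn.
rewrite tsr //; apply: le_lt_trans (cnorm_cscaleB _ _ _ _) _; rewrite ger0_norm ?(ltW rn0) //.
have term1 : r n * cnorm (csub (s n f) (g f)) < eps / 2.
  rewrite -(_ : b * (eps / (2 * b)) = eps / 2); last by field; rewrite gt_eqF.
  by have := cnorm_ge0 (csub (s n f) (g f)); have := sgn f ffs; nra.
have term2 : `|r n - c| * cnorm (g f) <= eps / 2.
  rewrite -(_ : eps / (2 * Bd) * Bd = eps / 2); last by field; rewrite gt_eqF.
  by apply: ler_pM; [exact: normr_ge0|exact: cnorm_ge0|exact: ltW|exact: gBd].
lra.
Qed.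

End VagueClusterScale.

Theorem theorem3p9 (R : realType) (G : topologicalZmodType)
  (vol : {measure set (borel G) -> \bar R}) (mu : @cmeasure R G) (A : nat -> set G) :
  hausdorff_space G -> locally_compact [set: G] -> @second_countable G ->
  haar_measure vol ->
  cm_locally_finite mu -> translation_bounded mu ->
  van_Hove vol A ->
  (0 < limn_einf (fun n => (fine (tvar mu (A n)) / fine (mev vol (A n)))%:E))%E ->
  (forall gc, vague_cluster (gamma_count mu A) gc ->
     exists2 C : R, 0 < C &
       exists2 gd, vague_cluster (gamma_dens vol mu A) gd & meas_eq_scaled gd C gc) /\
  (forall gd, vague_cluster (gamma_dens vol mu A) gd ->
     exists2 D : R, 0 < D &
       exists2 gc, vague_cluster (gamma_count mu A) gc & meas_eq_scaled gc D gd).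
Proof.
(* Second countability is unused: [vague_cluster] describes cluster points
   directly, without passing to subsequences. *)
move=> hG lc _ hv lf tb vH /limn_einf_gt0_lbound [a a0 [N1 r_ge]].
have [b [N2 r_le]] := tvar_density_bounded hG hv vH lc lf tb.
pose r := tvar_density vol mu A; pose N := maxn N1 N2.
have r_ab n : (N <= n)%N -> a <= r n <= b.
  by rewrite geq_max => /andP[/r_ge -> /r_le ->].
have r_gt0 n : (N <= n)%N -> 0 < r n by move=> /r_ab /andP[/(lt_le_trans a0)].
have vA0 n := van_Hove_vol_gt0 hv vH n.
split => [gc gc_cl | gd gd_cl].
- have [C /andP[aC _] gd_cl] := vague_cluster_scale a0 r_ab
    (fun n f Nn => gamma_densE f (vA0 n) (r_gt0 n Nn)) gc_cl.
  by exists C; [exact: lt_le_trans aC|exists (fun f => cscale C (gc f))].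
- have b0 : 0 < b.
    by have /andP[arN rNb] := r_ab N (leqnn N); exact: lt_le_trans a0 (le_trans arN rNb).
  have r_inv n : (N <= n)%N -> b^-1 <= (r n)^-1 <= a^-1.
    move=> Nn; have /andP[arn rnb] := r_ab n Nn; have rn0 := r_gt0 n Nn.
    by rewrite !lef_pV2 ?posrE ?arn ?rnb ?rn0 ?a0 ?b0.
  have binv0 : 0 < b^-1 by rewrite invr_gt0.
  have [D /andP[bD _] gc_cl] := vague_cluster_scale binv0 r_inv
    (fun n f Nn => gamma_countE f (vA0 n) (r_gt0 n Nn)) gd_cl.
  by exists D; [exact: lt_le_trans binv0 bD|exists (fun f => cscale D (gd f))].
Qed.
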